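(* Let $X$ be a unital Banach algebra with unit $e$, let $\theta\in X$, and let $M_\theta$ be either the left multiplication operator $y\mapsto\theta y$ or the right multiplication operator $y\mapsto y\theta$ on $X$. Then $M_\theta$ is recurrent if and only if $M_\theta$ is hyper-recurrent. Moreover, in this case $G(X)\subset\mathrm{Hr}(M_\theta)$, where $G(X)$ is the group of invertible elements of $X$.
   Context: For a bounded operator $T$ on a Banach space $X$: $x$ is recurrent if $T^{\omega_n}x\to x$ for some strictly increasing sequence $(\omega_n)$ of positive integers; $\mathrm{Rec}(T)$ is the set of recurrent vectors and $T$ is recurrent if $\mathrm{Rec}(T)$ is dense. $\mathfrak{C}$ is the set of strictly increasing sequences $\omega$ with $T^{\omega_n}x\to x$ for some $x\ne0$; $\mathfrak{L}(\omega)=\{x:T^{\omega_n}x\to x\}$. $\mathrm{Hr}(T)$ is the set of $x\in\mathrm{Rec}(T)$ such that $\mathfrak{L}(\omega)$ is dense for every $\omega\in\mathfrak{C}$ with $x\in\mathfrak{L}(\omega)$; a recurrent $T$ is hyper-recurrent if $\mathrm{Hr}(T)\ne\emptyset$. *)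

From HB Require Import structures.
From mathcomp Require Import all_boot all_order all_algebra.
From mathcomp Require Import all_classical all_reals all_analysis.
Set Implicit Arguments. Unset Strict Implicit. Unset Printing Implicit Defensive.
Import Order.TTheory GRing.Theory Num.Theory.
Import numFieldNormedType.Exports.
Local Open Scope classical_set_scope.
Local Open Scope ring_scope.

Section Recurrence.
Context {K : numFieldType} {X : normedModType K}.

Definition incr_pos_seq (w : nat -> nat) : Prop :=
  {homo w : m n / (m < n)%N} /\ (forall n, (0 < w n)%N).

Definition Lset (T : X -> X) (w : nat -> nat) : set X :=
  [set x | (fun n => iter (w n) T x) @ \oo --> x].

Definition recurrent_vector (T : X -> X) (x : X) : Prop :=
  exists w, incr_pos_seq w /\ Lset T w x.

Definition Rec (T : X -> X) : set X := [set x | recurrent_vector T x].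

Definition recurrent (T : X -> X) : Prop := dense (Rec T).

Definition Cset (T : X -> X) : set (nat -> nat) :=
  [set w | incr_pos_seq w /\ exists x, x != 0 /\ Lset T w x].

Definition Hr (T : X -> X) : set X :=
  [set x | Rec T x /\
     forall w, Cset T w -> Lset T w x -> dense (Lset T w)].

Definition hyper_recurrent (T : X -> X) : Prop :=
  recurrent T /\ Hr T !=set0.
End Recurrence.

Record unital_banach_algebra (K : numFieldType) (X : completeNormedModType K)
    (mul : X -> X -> X) (e : X) : Prop := {
  ba_mulA : forall x y z, mul x (mul y z) = mul (mul x y) z;
  ba_mul1x : forall x, mul e x = x;
  ba_mulx1 : forall x, mul x e = x;
  ba_mulDl : forall x y z, mul (x + y) z = mul x z + mul y z;
  ba_mulDr : forall x y z, mul x (y + z) = mul x y + mul x z;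
  ba_mulZl : forall (a : K) x y, mul (a *: x) y = a *: mul x y;
  ba_mulZr : forall (a : K) x y, mul x (a *: y) = a *: mul x y;
  ba_norm_mul : forall x y, `|mul x y| <= `|x| * `|y|
}.

Definition invertibles {K : numFieldType} {X : completeNormedModType K}
    (mul : X -> X -> X) (e : X) : set X :=
  [set x | exists y, mul x y = e /\ mul y x = e].

Definition mult_op {X : Type} (mul : X -> X -> X) (left : bool) (theta : X)
    : X -> X :=
  fun y => if left then mul theta y else mul y theta.

(* Recurrence of M_theta is governed by the powers of theta: whenever
   theta^(w n) -> e, every vector is recurrent along w.  Conversely,
   theta^(w n) -> e as soon as some vector of L(w) is invertible, or merely
   lies within distance 1/2 of e, since then ||a - e|| is controlled by
   ||a y - y||.  Recurrence provides such a vector y near e, so the whole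
   space is recurrent along its sequence, and each invertible x lies only in
   sets L(w) that are the whole space.  Right multiplication is left
   multiplication in the opposite algebra. *)
From HB Require Import structures.
From mathcomp Require Import all_boot all_order all_algebra.
From mathcomp Require Import all_classical all_reals all_analysis.
Import Order.TTheory GRing.Theory Num.Theory.
Import numFieldNormedType.Exports.
Local Open Scope classical_set_scope.
Local Open Scope ring_scope.

Lemma cvg_dist_le {K : numFieldType} {V W : normedModType K} {T : Type}
    {F : set_system T} {FF : Filter F} {u : T -> V} {v : T -> W} {l m} {c : K} :
  0 <= c -> v @ F --> m -> (forall t, `|u t - l| <= c * `|v t - m|) ->
  u @ F --> l.
Proof.
move=> c0 /cvgrPdist_lt vm uv; apply/cvgrPdist_lt => eps eps0.
have c1 : 0 < c + 1 by rewrite ltr_wpDl.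
apply: filterS (vm _ (divr_gt0 eps0 c1)) => t vt.
rewrite distrC; apply: le_lt_trans (uv t) _.
apply: (@le_lt_trans _ _ ((c + 1) * `|v t - m|)).
  by rewrite ler_wpM2r // lerDl.
by rewrite -ltr_pdivlMl // mulrC distrC.
Qed.

Lemma unital_banach_algebra_op {K : numFieldType} {X : completeNormedModType K}
    {mul : X -> X -> X} {e : X} :
  unital_banach_algebra mul e -> unital_banach_algebra (fun x y => mul y x) e.
Proof.
case=> mulA mul1x mulx1 mulDl mulDr mulZl mulZr norm_mul; split => // x y.
by rewrite mulrC norm_mul.
Qed.

Section UnitalBanachAlgebra.
Context {K : numFieldType} {X : completeNormedModType K}.
Context {mul : X -> X -> X} {e : X} (HX : unital_banach_algebra mul e).

Lemma ba_mulBl x y z : mul (x - y) z = mul x z - mul y z.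
Proof.
by apply/eqP; rewrite -subr_eq opprK -(ba_mulDl HX) subrK.
Qed.

Lemma ba_mulBr x y z : mul z (x - y) = mul z x - mul z y.
Proof.
by apply/eqP; rewrite -subr_eq opprK -(ba_mulDr HX) subrK.
Qed.

Lemma ba_normB1_le_near1 a y :
  `|e - y| <= 2^-1 -> `|a - e| <= 2 * `|mul a y - y|.
Proof.
move=> ye.
have split_ae : a - e = (mul a y - y) + mul (a - e) (e - y).
  by rewrite ba_mulBr !ba_mulBl !(ba_mulx1 HX) (ba_mul1x HX) [RHS]addrC subrK.
have : `|a - e| <= `|mul a y - y| + `|a - e| / 2.
  rewrite {1}split_ae (le_trans (ler_normD _ _)) // lerD2l.
  by rewrite (le_trans (ba_norm_mul HX _ _)) // ler_wpM2l.
by rewrite {1}(splitr `|a - e|) lerD2r ler_pdivrMr // mulrC.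
Qed.

Lemma ba_normB1_le_inv {x x'} a :
  mul x x' = e -> `|a - e| <= `|x'| * `|mul a x - x|.
Proof.
move=> xx'; have -> : a - e = mul (mul a x - x) x'.
  by rewrite ba_mulBl -(ba_mulA HX) xx' (ba_mulx1 HX).
by rewrite mulrC (ba_norm_mul HX).
Qed.

Variable theta : X.
Let T := mult_op mul true theta.
Let pow k := iter k T e.

Lemma iter_mult_op k z : iter k T z = mul (pow k) z.
Proof.
elim: k => [|k IH] /=; first by rewrite (ba_mul1x HX).
by rewrite /T /mult_op IH (ba_mulA HX).
Qed.

Lemma Lset_full {w} : pow \o w @ \oo --> e -> Lset T w = setT.
Proof.
move=> powe; apply/seteqP; split => // z _.
apply: (cvg_dist_le (normr_ge0 z) powe) => n.
rewrite iter_mult_op -{2}(ba_mul1x HX z) -ba_mulBl.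
by rewrite mulrC (ba_norm_mul HX).
Qed.

Lemma pow_cvg1_near1 {w y} : `|e - y| <= 2^-1 -> Lset T w y -> pow \o w @ \oo --> e.
Proof.
move=> ye Ly; apply: (cvg_dist_le (ler0n K 2) Ly) => n.
by rewrite iter_mult_op ba_normB1_le_near1.
Qed.

Lemma pow_cvg1_invertible {w x} :
  invertibles mul e x -> Lset T w x -> pow \o w @ \oo --> e.
Proof.
move=> [x' [xx' _]] Lx; apply: (cvg_dist_le (normr_ge0 x') Lx) => n.
by rewrite iter_mult_op (ba_normB1_le_inv _ xx').
Qed.

Lemma recurrent_near1 : recurrent T ->
  exists w y, [/\ incr_pos_seq w, `|e - y| <= 2^-1 & Lset T w y].
Proof.
move=> Trec; have [|y [ye [w [w_incr Ly]]]] := Trec _ _ (ball_open e (2^-1)).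
  by exists e; apply: ballxx; rewrite invr_gt0.
by exists w, y; split => //; move: ye; rewrite -ball_normE => /ltW.
Qed.

Lemma invertibles_sub_Hr_left : recurrent T -> invertibles mul e `<=` Hr T.
Proof.
move=> /recurrent_near1 [w [y [w_incr ye Ly]]] x xinv; split.
  by exists w; split; rewrite // (Lset_full (pow_cvg1_near1 ye Ly)).
move=> w' _ Lx; rewrite (Lset_full (pow_cvg1_invertible xinv Lx)).
by move=> O O0 _; rewrite setIT.
Qed.

End UnitalBanachAlgebra.

Theorem theorem5p5 (K : numFieldType) (X : completeNormedModType K)
    (mul : X -> X -> X) (e : X) (HX : unital_banach_algebra mul e)
    (theta : X) (left : bool) :
  (recurrent (mult_op mul left theta) <->
     hyper_recurrent (mult_op mul left theta)) /\
  (recurrent (mult_op mul left theta) ->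
     invertibles mul e `<=` Hr (mult_op mul left theta)).
Proof.
have invertibles_sub_Hr : recurrent (mult_op mul left theta) ->
    invertibles mul e `<=` Hr (mult_op mul left theta).
  case: left; first exact: invertibles_sub_Hr_left.
  move=> Trec x [x' [xx' x'x]].
  by apply: (invertibles_sub_Hr_left (unital_banach_algebra_op HX) theta Trec);
    exists x'.
split => //; split => [Trec | []//]; split => //.
by exists e; apply: invertibles_sub_Hr => //; exists e; rewrite (ba_mul1x HX).
Qed.
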